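(* Let $i\in J$. Let $\sigma_i$ be the permutation of $\{0,1,\dots,l\}$ such that $$t_iw_iw_0(v_0^\circ,v_1^\circ,\dots,v_l^\circ)=(v^\circ_{\sigma_i(0)},v^\circ_{\sigma_i(1)},\dots,v^\circ_{\sigma_i(l)}).$$ Then $\mathrm{sign}(\sigma_i)=(-1)^{l(w_iw_0)}$.
   Context: Setting: $G$ is the group of $K$-points of an adjoint quasi-simple group split over a non-archimedean local field $K$ (valuation $\omega$, $\omega(K^* )=\mathbb Z$), $T$ a maximal split torus, $\Phi$ its (reduced, irreducible) root system with basis $\alpha_1,\dots,\alpha_l$, $W$ the Weyl group, $V=X_*(T)\otimes\mathbb R$. $\tilde\alpha=\sum_i n_i\alpha_i$ is the highest root, $\varpi_1,\dots,\varpi_l$ the fundamental coweights, and $J=\{i: n_i=1\}$. The fundamental chamber $C_0=\{x\in V:\langle x,\alpha_j\rangle>0,\ \langle x,\tilde\alpha\rangle<1\}$ has vertices $v_0^\circ=0$ and $v_j^\circ=\varpi_j/n_j$ ($1\le j\le l$). $t_i\in T$ is an element with $\nu(t_i)=\varpi_i$, where $\nu:T\to X_*(T)$ satisfies $\langle\nu(t),\chi\rangle=-\omega(\chi(t))$; $t_i$ acts on $V$ (as affine space) by translation by $\varpi_i$ and $W$ acts linearly, so $t_iw_iw_0(x)=w_iw_0(x)+\varpi_i$. $w_0$ is the longest element of $W$ and $w_i$ the longest element of the Weyl group generated by the reflections $s_{\alpha_j}$, $j\ne i$; for $i\in J$ one has $t_iw_iw_0C_0=C_0$, so $t_iw_iw_0$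 permutes the vertices of $C_0$. $l(\cdot)$ is the length in $W$ with respect to the simple reflections. *)

From HB Require Import structures.
From mathcomp Require Import all_boot all_order all_algebra all_fingroup.
From mathcomp Require Import reals.
Set Implicit Arguments. Unset Strict Implicit. Unset Printing Implicit Defensive.
Import Order.TTheory GRing.Theory Num.Theory.
Local Open Scope ring_scope.

(* Euclidean model: V = 'rV[R]_l with the standard inner product; V is
   identified with its dual, so <x, a> = dot x a and the coroot of a is
   2a/(a,a). *)
Section RootSystems.
Variables (R : realType) (l : nat).
Notation vec := 'rV[R]_l.

Definition dot (x y : vec) : R := (x *m y^T) ord0 ord0.

Definition refl (a x : vec) : vec := x - ((2 * dot x a) / dot a a) *: a.

Definition root_system (Phi : seq vec) : Prop :=
  [/\ 0 \notin Phi,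
      (forall x : vec, (forall a, a \in Phi -> dot x a = 0) -> x = 0),
      (forall a b, a \in Phi -> b \in Phi -> refl a b \in Phi),
      (forall a b, a \in Phi -> b \in Phi -> (2 * dot b a) / dot a a \is a Num.int)
    & (forall a (c : R), a \in Phi -> c *: a \in Phi -> c = 1 \/ c = -1)].

Definition irreducible_rs (Phi : seq vec) : Prop :=
  forall P : pred vec,
    (forall a b, a \in Phi -> b \in Phi -> P a -> ~~ P b -> dot a b = 0) ->
    (forall a, a \in Phi -> P a) \/ (forall a, a \in Phi -> ~~ P a).

Definition is_base (Phi : seq vec) (alpha : 'I_l -> vec) : Prop :=
  (forall j, alpha j \in Phi) /\
  (forall b, b \in Phi -> exists c : 'I_l -> int,
      b = \sum_j (c j)%:~R *: alpha j /\
      ((forall j, 0 <= c j) \/ (forall j, c j <= 0))).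

Definition highest_root (Phi : seq vec) (alpha : 'I_l -> vec) (ta : vec) : Prop :=
  ta \in Phi /\
  (forall b, b \in Phi -> exists c : 'I_l -> int,
      ta - b = \sum_j (c j)%:~R *: alpha j /\ (forall j, 0 <= c j)).

Definition wact (alpha : 'I_l -> vec) (s : seq 'I_l) (x : vec) : vec :=
  foldr (fun j y => refl (alpha j) y) x s.

Definition reduced_word (alpha : 'I_l -> vec) (s : seq 'I_l) : Prop :=
  forall s', (forall x, wact alpha s' x = wact alpha s x) -> (size s <= size s')%N.

Definition longest_word (alpha : 'I_l -> vec) (S : pred 'I_l) (s : seq 'I_l) : Prop :=
  [/\ all S s, reduced_word alpha s &
      forall s', all S s' -> reduced_word alpha s' -> (size s' <= size s)%N].

Definition weyl_length (alpha : 'I_l -> vec) (s : seq 'I_l) (n : nat) : Prop :=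
  exists s', [/\ forall x, wact alpha s' x = wact alpha s x,
                 reduced_word alpha s' & size s' = n].

(* vertices of C_0: index 0 |-> 0, index j+1 |-> varpi_j / n_j *)
Definition vertex (varpi : 'I_l -> vec) (ncoef : 'I_l -> R) (k : 'I_l.+1) : vec :=
  match unlift ord0 k with
  | Some j => (ncoef j)^-1 *: varpi j
  | None => 0
  end.

End RootSystems.

From HB Require Import structures.
From mathcomp Require Import all_boot all_order all_algebra all_fingroup.
From mathcomp Require Import reals.
Set Implicit Arguments. Unset Strict Implicit. Unset Printing Implicit Defensive.
Import Order.TTheory GRing.Theory Num.Theory.
Local Open Scope ring_scope.

(* In homogeneous coordinates the affine map x |-> x w + varpi_i is the block
   matrix A = [[1, varpi_i], [0, w]], so det A = det w = (-1)^l(w), each simple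
   reflection having determinant -1.  The matrix V whose rows are the
   homogeneous coordinates (1, v_k) of the vertices of C_0 is invertible, the
   vertices being affinely independent, and V A = P_sigma V because A permutes
   the vertices by sigma; hence det A = det P_sigma = sign(sigma). *)

Section RankOneUpdate.
Variables (R : comPzRingType) (l : nat).

Lemma det_add_rank1 (u : 'cV[R]_l) (v : 'rV[R]_l) :
  \det (1%:M + u *m v) = 1 + (v *m u) 0 0.
Proof.
(* Factor B through each of its two Schur complements. *)
pose B := block_mx (1%:M : 'M[R]_1) (- v) u 1%:M.
have B_lower : B = block_mx 1%:M 0 u 1%:M *m block_mx 1%:M (- v) 0 (1%:M + u *m v).
  rewrite mulmx_block !mul1mx !mulmx0 !mul0mx !addr0 mulmxN mulmx1.
  by rewrite /B addrCA addNr addr0.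
have B_upper : B = block_mx (1%:M + v *m u) (- v) 0 1%:M *m block_mx 1%:M 0 u 1%:M.
  by rewrite mulmx_block !mulmx1 !mul1mx ?mulmx0 ?mul0mx ?addr0 ?add0r mulNmx /B addrK.
have := congr1 determinant B_upper; rewrite {1}B_lower !det_mulmx det_lblock !det_ublock.
by rewrite !det1 !mul1r !mulr1 det_mx11 !mxE eqxx.
Qed.

End RankOneUpdate.

Section Homogeneous.
Variables (R : comUnitRingType) (l : nat).

Definition hom_mx (p : 'I_l.+1 -> 'rV[R]_l) : 'M[R]_(l.+1, 1 + l) :=
  \matrix_k row_mx 1%:M (p k).

Definition affine_mx (M : 'M[R]_l) (t : 'rV[R]_l) : 'M[R]_(1 + l) :=
  block_mx 1%:M t 0 M.

Lemma mul_row1_affine_mx (x t : 'rV[R]_l) M :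
  row_mx 1%:M x *m affine_mx M t = row_mx 1%:M (x *m M + t).
Proof. by rewrite mul_row_block !mul1mx !mulmx0 addr0 addrC. Qed.

Lemma det_affine_mx M t : \det (affine_mx M t) = \det M.
Proof. by rewrite det_ublock det1 mul1r. Qed.

Lemma det_hom_mx0 (p : 'I_l.+1 -> 'rV[R]_l) : p ord0 = 0 ->
  \det (hom_mx p) = \det (\matrix_j p (lift ord0 j)).
Proof.
move=> p0.
have -> : hom_mx p = block_mx 1%:M 0 (const_mx 1) (\matrix_j p (lift ord0 j)) :> 'M_(1 + l).
  apply/matrixP => k c; rewrite !mxE.
  case: (splitP k) => [k1 Hk|k1 Hk]; rewrite !mxE.
    have -> : k = ord0 by apply: ord_inj; rewrite Hk (ord1 k1).
    by rewrite p0; case: splitP => c1 _; rewrite !mxE // (ord1 k1) (ord1 c1).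
  have -> : k = lift ord0 k1 by apply: ord_inj; rewrite Hk.
  by case: splitP => c1 _; rewrite !mxE // (ord1 c1).
by rewrite [LHS](det_lblock (1%:M : 'M[R]_1)) det1 mul1r.
Qed.

Lemma det_affine_perm (p : 'I_l.+1 -> 'rV[R]_l) M t (sigma : 'S_l.+1) :
  hom_mx p \in unitmx -> (forall k, p k *m M + t = p (sigma k)) ->
  \det M = (-1) ^+ sigma.
Proof.
move=> p_unit sigma_p.
have E : hom_mx p *m affine_mx M t = perm_mx sigma *m hom_mx p.
  rewrite -row_permE; apply/row_matrixP => k.
  by rewrite row_mul !rowK mul_row1_affine_mx sigma_p; apply/rowP => c; rewrite !mxE.
have := congr1 determinant E; rewrite !det_mulmx det_perm det_affine_mx mulrC.
by move/mulIr; apply; rewrite -unitmxE.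
Qed.

End Homogeneous.

Section WeylMatrices.
Variables (R : realType) (l : nat).
Notation vec := 'rV[R]_l.

Lemma dotZr (x y : vec) c : dot x (c *: y) = c * dot x y.
Proof. by rewrite /dot linearZ /= -scalemxAr mxE. Qed.

Lemma dotZl (x y : vec) c : dot (c *: x) y = c * dot x y.
Proof. by rewrite /dot -scalemxAl mxE. Qed.

Lemma dotBr (x y z : vec) : dot x (y - z) = dot x y - dot x z.
Proof. by rewrite /dot linearB /= mulmxBr !mxE. Qed.

Lemma dot_sumr (x : vec) (I : finType) (f : I -> vec) :
  dot x (\sum_k f k) = \sum_k dot x (f k).
Proof. by rewrite /dot linear_sum /= mulmx_sumr summxE. Qed.

Lemma dot_self_eq0 (a : vec) : (dot a a == 0) = (a == 0).
Proof.
have dot_aa : dot a a = \sum_k a 0 k ^+ 2.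
  by rewrite /dot mxE; apply: eq_bigr => k _; rewrite mxE expr2.
apply/eqP/eqP => [|->]; last by rewrite /dot mul0mx mxE.
rewrite dot_aa => /psumr_eq0P aa0; apply/rowP => k; rewrite mxE; apply/eqP.
by rewrite -sqrf_eq0 aa0 // => j _; exact: sqr_ge0.
Qed.

Definition refl_mx (a : vec) : 'M[R]_l := 1%:M - (2 / dot a a) *: (a^T *m a).

Lemma refl_mxE (a x : vec) : refl a x = x *m refl_mx a.
Proof.
rewrite /refl /refl_mx mulmxBr mulmx1 -scalemxAr mulmxA [x *m a^T]mx11_scalar.
by rewrite mul_scalar_mx scalerA mulrAC.
Qed.

Lemma det_refl_mx (a : vec) : a != 0 -> \det (refl_mx a) = -1.
Proof.
rewrite -dot_self_eq0 => aa_neq0.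
rewrite /refl_mx -scaleNr scalemxAr det_add_rank1 -scalemxAl mxE mulNr.
by rewrite -/(dot a a) divfK // opprD addrA subrr add0r.
Qed.

Definition weyl_mx (alpha : 'I_l -> vec) (s : seq 'I_l) : 'M[R]_l :=
  foldr (fun j M => M *m refl_mx (alpha j)) 1%:M s.

Lemma wactE alpha s x : wact alpha s x = x *m weyl_mx alpha s.
Proof.
elim: s => [|j s IH] /=; first by rewrite mulmx1.
by rewrite -/(wact alpha s x) IH refl_mxE mulmxA.
Qed.

Lemma det_weyl_mx alpha s : (forall j, alpha j != 0) ->
  \det (weyl_mx alpha s) = (-1) ^+ size s.
Proof.
move=> alpha_neq0; elim: s => [|j s IH] /=; first by rewrite det1.
by rewrite det_mulmx IH det_refl_mx // exprSr.
Qed.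

Lemma det_weyl_length alpha s n : (forall j, alpha j != 0) ->
  weyl_length alpha s n -> \det (weyl_mx alpha s) = (-1) ^+ n.
Proof.
move=> alpha_neq0 [s' [s's _ <-]]; rewrite -(det_weyl_mx s' alpha_neq0); congr (\det _).
by apply/row_matrixP => k; rewrite !rowE -!wactE s's.
Qed.

End WeylMatrices.

Section DualBases.
Variables (R : realType) (l : nat).
Notation vec := 'rV[R]_l.
Variables (alpha varpi : 'I_l -> vec).
Hypothesis varpi_dual : forall j k, dot (varpi j) (alpha k) = (j == k)%:R.

Lemma dual_coord j (d : 'I_l -> R) : dot (varpi j) (\sum_k d k *: alpha k) = d j.
Proof.
rewrite dot_sumr (bigD1 j) //= big1 => [|k /negbTE kj]; last first.
  by rewrite dotZr varpi_dual eq_sym kj mulr0.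
by rewrite dotZr varpi_dual eqxx mulr1 addr0.
Qed.

Lemma highest_root_coef_ge1 Phi ta ncoef j :
  highest_root Phi alpha ta -> ta = \sum_k ncoef k *: alpha k ->
  alpha j \in Phi -> 1 <= ncoef j.
Proof.
move=> [_ ta_max] ta_def /ta_max [c [ta_alpha c_ge0]].
have := congr1 (dot (varpi j)) ta_alpha.
rewrite dotBr dual_coord varpi_dual eqxx ta_def dual_coord => /eqP.
by rewrite subr_eq => /eqP ->; rewrite lerDr ler0z.
Qed.

Lemma dual_rows_unitmx (u a : 'I_l -> vec) :
  (forall j k, dot (u j) (a k) = (j == k)%:R) -> \matrix_j u j \in unitmx.
Proof.
move=> ua_dual; suff : \matrix_j u j *m (\matrix_k a k)^T = 1%:M by case/mulmx1_unit.
apply/matrixP => j k; rewrite !mxE -ua_dual /dot mxE; apply: eq_bigr => c _.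
by rewrite !mxE.
Qed.

Lemma vertex_hom_mx_unit (ncoef : 'I_l -> R) : (forall j, ncoef j != 0) ->
  hom_mx (vertex varpi ncoef) \in unitmx.
Proof.
move=> ncoef_neq0; rewrite unitmxE det_hom_mx0 /vertex ?unlift_none // -unitmxE.
under eq_mx => j c do rewrite liftK.
apply: (@dual_rows_unitmx _ (fun k => ncoef k *: alpha k)) => j k.
rewrite dotZl dotZr varpi_dual; case: eqP => [<-|_]; last by rewrite !mulr0.
by rewrite mulr1 mulVf.
Qed.

End DualBases.

Unset Implicit Arguments.
Theorem mainTheorem4 (R : realType) (l : nat) (Phi : seq 'rV[R]_l)
  (alpha : 'I_l -> 'rV[R]_l) (ta : 'rV[R]_l) (ncoef : 'I_l -> R)
  (varpi : 'I_l -> 'rV[R]_l) (w0 : seq 'I_l) (i : 'I_l) (wi : seq 'I_l) :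
  root_system Phi -> irreducible_rs Phi -> is_base Phi alpha ->
  highest_root Phi alpha ta ->
  ta = \sum_j ncoef j *: alpha j ->
  (forall j k, dot (varpi j) (alpha k) = (j == k)%:R) ->
  longest_word alpha predT w0 ->
  longest_word alpha (fun j => j != i) wi ->
  ncoef i = 1 ->
  forall (sigma : 'S_(l.+1)) (n : nat),
    (forall k : 'I_l.+1,
       wact alpha (wi ++ w0) (vertex varpi ncoef k) + varpi i
       = vertex varpi ncoef (sigma k)) ->
    weyl_length alpha (wi ++ w0) n ->
    (-1) ^+ (odd_perm sigma) = (-1) ^+ n :> int.
Proof.
(* Irreducibility, the longest words and n_i = 1 only guarantee that sigma
   exists; the sign identity holds for any affine map permuting the vertices. *)
move=> [Phi_neq0 _ _ _ _] _ [alpha_Phi _] ta_highest ta_def varpi_dual _ _ _.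
move=> sigma n sigma_vertex wlen.
have alpha_neq0 j : alpha j != 0 by apply: contraNneq Phi_neq0 => <-.
have ncoef_neq0 j : ncoef j != 0.
  have := highest_root_coef_ge1 varpi_dual ta_highest ta_def (alpha_Phi j).
  by move/(lt_le_trans ltr01)/lt0r_neq0.
have sigma_affine k : vertex varpi ncoef k *m weyl_mx alpha (wi ++ w0) + varpi i
                      = vertex varpi ncoef (sigma k) by rewrite -wactE.
have := det_affine_perm (vertex_hom_mx_unit varpi_dual ncoef_neq0) sigma_affine.
by rewrite (det_weyl_length alpha_neq0 wlen) -signr_odd => /signr_inj <-; rewrite signr_odd.
Qed.
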